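(* Let $\mathscr T=(V,\mathcal E)$ be the directed Cartesian product of rooted directed trees $\mathscr T_1,\dots,\mathscr T_d$, let $S_{\boldsymbol\lambda}=(S_1,\dots,S_d)$ be a commuting multishift on $\mathscr T$ and let $E=\bigcap_j\ker S_j^*$. Then $$\bigvee_{j=1}^d\bigoplus_{v\in D_j}\Big(l^2(\mathsf{Chi}_j(v))\ominus[\Gamma^{(j)}_v]\Big)\oplus[e_{\mathsf{root}}]\ \subseteq\ E\ \subseteq\ \bigvee\{e_v:v\in F_1\times\dots\times F_d\},$$ where $D_j=\{v\in V:v_j\in V^{(j)}_\prec,\ v_i=\mathsf{root}_i\text{ for }i\ne j\}$, $\Gamma^{(j)}_v:\mathsf{Chi}_j(v)\to\mathbb C$ is $\Gamma^{(j)}_v(u)=\lambda^{(j)}_u$, and $F_j=\mathsf{Chi}(V^{(j)}_\prec)\cup\{\mathsf{root}_j\}$.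
   Context: Directed trees: no loops or circuits, connected ignoring orientation, unique parent $\mathsf{par}(v)$ for vertices with incoming edges; rooted: unique parentless vertex $\mathsf{root}$; $\mathsf{Chi}(u)=\{v:(u,v)\in\mathcal E\}$, $\mathsf{Chi}(W)=\bigcup_{u\in W}\mathsf{Chi}(u)$; all leafless. $V^{(j)}_\prec=\{u\in V_j:\mathrm{card}\,\mathsf{Chi}(u)\ge2\}$. Directed Cartesian product of rooted trees $\mathscr T_j=(V_j,\mathcal E_j)$: $V=V_1\times\dots\times V_d$ (countably infinite), $(v,w)\in\mathcal E$ iff for some $k$, $(v_k,w_k)\in\mathcal E_k$ and $w_j=v_j$ ($j\ne k$); $\mathsf{root}=(\mathsf{root}_j)$. $\mathsf{Chi}_j(v)=\{w:w_j\in\mathsf{Chi}(v_j),w_k=v_k\ (k\ne j)\}$. Multishift: positive weights, $S_je_v=\sum_{w\in\mathsf{Chi}_j(v)}\lambda^{(j)}_we_w$, each $S_j$ bounded on $l^2(V)$. $l^2(W)$ for $W\subseteq V$ is viewed as a subspace of $l^2(V)$; $[x]$ is the span of $x$; $\bigvee$ is closed linear span. *)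

From HB Require Import structures.
From mathcomp Require Import all_boot all_order all_algebra.
From mathcomp Require Import all_classical all_reals.
From mathcomp Require Import complex.
From mathcomp Require Import ereal esum.

Set Implicit Arguments.
Unset Strict Implicit.
Unset Printing Implicit Defensive.

Import Order.TTheory GRing.Theory Num.Theory.
Local Open Scope classical_set_scope.
Local Open Scope ring_scope.

Record rtree := RTree {
  tv : countType;
  tedge : rel tv;
  troot : tv;
  tree_noloop : forall v, ~~ tedge v v;
  tree_nocircuit : forall v (s : seq tv), s != [::] -> path tedge v s -> last v s != v;
  tree_connected : forall u v, exists s : seq tv,
      path (fun a b => tedge a b || tedge b a) u s /\ last u s = v;
  tree_par_uniq : forall u1 u2 v, tedge u1 v -> tedge u2 v -> u1 = u2;
  tree_root_noparent : forall u, ~~ tedge u troot;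
  tree_root_unique : forall v, v <> troot -> exists u, tedge u v;
  tree_leafless : forall u, exists v, tedge u v
}.

Definition tChi (T : rtree) (u : tv T) : set (tv T) := [set v | tedge u v].

Definition Vprec (T : rtree) : set (tv T) :=
  [set u | exists v1 v2, v1 <> v2 /\ tedge u v1 /\ tedge u v2].

Definition Fset (T : rtree) : set (tv T) :=
  [set w | w = troot T \/ exists u, @Vprec T u /\ tedge u w].

Section Product.
Variables (d : nat) (Tr : 'I_d -> rtree).

Definition PV : Type := {dffun forall j : 'I_d, tv (Tr j)}.

Definition proot : PV := [ffun j => troot (Tr j)].

Definition Chij (j : 'I_d) (v : PV) : set PV :=
  [set w | tedge (v j) (w j) /\ forall k, k != j -> w k = v k].

Definition Dj (j : 'I_d) : set PV :=
  [set v | Vprec (v j) /\ forall i, i != j -> v i = troot (Tr i)].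

Definition Fprod : set PV := [set v | forall j, Fset (v j)].

End Product.

Section L2.
Variables (R : realType) (V : choiceType).
Local Notation C := R[i].

Definition sqnorm (f : V -> C) : \bar R :=
  \esum_(v in [set: V]) ((Normc.normc (f v)) ^+ 2)%:E.

Definition l2 (f : V -> C) : Prop := (sqnorm f < +oo)%E.

Definition has_sum (a : V -> C) (c : C) : Prop :=
  forall eps : R, 0 < eps -> exists A0 : set V, finite_set A0 /\
    forall A : set V, finite_set A -> A0 `<=` A ->
      Normc.normc (\sum_(v \in A) a v - c) < eps.

Definition inner_is (f g : V -> C) (c : C) : Prop :=
  has_sum (fun v => f v * conjc (g v)) c.

Definition ebasis (v : V) : V -> C := fun w => if w == v then 1 else 0.

Definition clspan (A : set (V -> C)) : set (V -> C) :=
  [set f | l2 f /\ forall eps : R, 0 < eps ->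
     exists n (a : 'I_n -> C) (x : 'I_n -> V -> C),
       (forall i, A (x i)) /\
       (sqnorm (fun v => (f v - \sum_(i < n) a i * x i v)%R) < eps%:E)%E].

End L2.

Section Multishift.
Variables (R : realType) (d : nat) (Tr : 'I_d -> rtree).
Local Notation PV := (PV Tr).
Local Notation C := R[i].

(* S_j f (w) = lam^{(j)}_w f(par_j w)  (0 if w_j = root_j), i.e. the operator
   determined by S_j e_v = sum_{w in Chi_j(v)} lam^{(j)}_w e_w.               *)
Definition shiftj (lam : 'I_d -> PV -> R) (j : 'I_d) (f : PV -> C) : PV -> C :=
  fun w => \sum_(v \in [set v | Chij j v w]) real_complex R (lam j w) * f v.

Definition is_multishift (lam : 'I_d -> PV -> R) : Prop :=
  (forall j (w : PV), w j <> troot (Tr j) -> 0 < lam j w) /\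
  (forall j, exists M : R, forall f : PV -> C, l2 f ->
       (sqnorm (shiftj lam j f) <= M%:E * sqnorm f)%E).

Definition commuting_multishift (lam : 'I_d -> PV -> R) : Prop :=
  forall i j (f : PV -> C), l2 f ->
    shiftj lam i (shiftj lam j f) = shiftj lam j (shiftj lam i f).

(* E = \bigcap_j ker S_j^*  ( f in ker S_j^*  iff  <S_j g, f> = 0 for all g in l^2 ) *)
Definition joint_kernel_adj (lam : 'I_d -> PV -> R) : set (PV -> C) :=
  [set f | l2 f /\ forall j (g : PV -> C), l2 g -> inner_is (shiftj lam j g) f 0].

(* Gamma^{(j)}_v : Chi_j(v) -> C, u |-> lam^{(j)}_u, extended by 0 *)
Definition Gamma (lam : 'I_d -> PV -> R) (j : 'I_d) (v : PV) : PV -> C :=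
  fun u => if `[< Chij j v u >] then real_complex R (lam j u) else 0.

Definition chi_minus_gamma (lam : 'I_d -> PV -> R) (j : 'I_d) (v : PV) : set (PV -> C) :=
  [set f | l2 f /\ (forall u, ~ Chij j v u -> f u = 0) /\ inner_is f (Gamma lam j v) 0].

Definition lower_space (lam : 'I_d -> PV -> R) : set (PV -> C) :=
  clspan ([set f | exists j v, Dj j v /\ chi_minus_gamma lam j v f]
          `|` [set @ebasis R _ (proot Tr)]).

Definition upper_space : set (PV -> C) :=
  clspan [set @ebasis R _ v | v in @Fprod d Tr].

End Multishift.

From mathcomp Require Import all_boot all_order all_algebra.
From mathcomp Require Import all_classical all_reals.
From mathcomp Require Import complex.
From mathcomp Require Import finmap ereal esum.
From mathcomp.algebra_tactics Require Import ring lra.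

(* Write (S_j g)(w) = lambda^(j)_w g(par_j w), which vanishes when w_j is a root,
   so that S_j e_u = Gamma^(j)_u and f lies in E iff f is orthogonal to every
   S_j g.  Lower bound: if x is supported in Chi_k(v) with v in D_k, then on that
   support S_j g vanishes for j <> k (the coordinate j is still a root), while for
   j = k it equals g(v) Gamma^(k)_v, so <S_j g, x> = g(v) <Gamma^(k)_v, x> = 0; and
   e_root is orthogonal to the range because the root has no parent.  Orthogonality
   to a fixed vector passes to closed linear spans (Cauchy-Schwarz).  Upper bound:
   if w is not in F_1 x ... x F_d, some w_j <> root_j has a parent with a single
   child, so w is the only j-child of its j-parent u, and
   0 = <S_j e_u, f> = lambda^(j)_w conj (f w) forces f w = 0.  A vector vanishing
   off a set lies in the closed span of the corresponding basis vectors. *)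

Set Implicit Arguments.
Unset Strict Implicit.
Unset Printing Implicit Defensive.
Import Order.TTheory GRing.Theory Num.Theory.

Local Open Scope classical_set_scope.
Local Open Scope ring_scope.

Section L2.
Variables (R : realType) (V : choiceType).
Local Notation C := R[i].
Local Notation normc := (@Normc.normc R).

Lemma normc_ge0 (x : C) : 0 <= normc x.
Proof. by case: x => a b; rewrite /Normc.normc sqrtr_ge0. Qed.

Lemma normc_conjc (x : C) : normc (conjc x) = normc x.
Proof. by case: x => a b; rewrite /Normc.normc /= sqrrN. Qed.

Lemma normc_eq0 (x : C) : (normc x == 0) = (x == 0).
Proof. by apply/eqP/eqP => [/Normc.eq0_normc | ->] //; exact: Normc.normc0. Qed.

Lemma ler_normc_sum (I : Type) (r : seq I) (F : I -> C) :
  normc (\sum_(i <- r) F i) <= \sum_(i <- r) normc (F i).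
Proof.
elim: r => [|x r IH]; first by rewrite !big_nil Normc.normc0.
by rewrite !big_cons; apply: le_trans (le_normcD _ _) _; exact: lerD.
Qed.

Lemma sqnorm_ge0 (f : V -> C) : (0 <= sqnorm f)%E.
Proof. by apply: esum_ge0 => x _; rewrite lee_fin sqr_ge0. Qed.

Lemma l2_fin_num (f : V -> C) : l2 f -> sqnorm f \is a fin_num.
Proof. by move=> l2f; rewrite ge0_fin_numE // sqnorm_ge0. Qed.

Lemma fsum_sqr_le_sqnorm (f : V -> C) (A : set V) : finite_set A ->
  ((\sum_(v <- fset_set A) normc (f v) ^+ 2)%:E <= sqnorm f)%E.
Proof.
move=> fA; apply: esum_ge; exists A; first by split.
by rewrite fsumEFin // fsbig_finite.
Qed.

Lemma ebasis_l2 (u : V) : l2 (ebasis R u).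
Proof.
rewrite /l2 /sqnorm (esumID [set u]); last by move=> x _; rewrite lee_fin sqr_ge0.
rewrite setTI esum_set1; last by rewrite lee_fin sqr_ge0.
rewrite esum1 ?adde0 ?ltry // => v [_ /= vu].
by rewrite /ebasis; case: eqP => // _; rewrite Normc.normc0 expr0n.
Qed.

Lemma eq_has_sum (a b : V -> C) c : a =1 b -> has_sum a c -> has_sum b c.
Proof. by move=> /funext ->. Qed.

Lemma has_sum0 : has_sum (fun _ : V => 0 : C) 0.
Proof.
move=> e e0; exists set0; split => // A _ _.
by rewrite fsbig1 // subr0 Normc.normc0.
Qed.

Lemma has_sumD (a b : V -> C) c e : has_sum a c -> has_sum b e ->
  has_sum (fun v => a v + b v) (c + e).
Proof.
move=> ha hb eps eps0; have e2 : 0 < eps / 2 by rewrite divr_gt0.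
have [A1 [fA1 H1]] := ha _ e2; have [A2 [fA2 H2]] := hb _ e2.
exists (A1 `|` A2); split => [|A fA sA]; first by rewrite finite_setU.
rewrite fsbig_split // opprD addrACA.
apply: le_lt_trans (le_normcD _ _) _; rewrite [eps]splitr.
by apply: ltrD; [apply: H1 | apply: H2] => // x Ax; apply: sA; [left | right].
Qed.

Lemma has_sumZl (a : V -> C) c k : has_sum a c ->
  has_sum (fun v => k * a v) (k * c).
Proof.
move=> ha eps eps0; have k1 : 0 < normc k + 1 by rewrite ltr_wpDl // normc_ge0.
have [A1 [fA1 H1]] := ha _ (divr_gt0 eps0 k1).
exists A1; split => // A fA sA.
rewrite -mulr_fsumr -mulrBr Normc.normcM.
have := H1 A fA sA; set x := normc _ => hx.
apply: (@le_lt_trans _ _ ((normc k + 1) * x)); last by rewrite mulrC -ltr_pdivlMr.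
by rewrite ler_wpM2r ?normc_ge0 // lerDl.
Qed.

Lemma has_sum_conjc (a : V -> C) c : has_sum a c ->
  has_sum (fun v => conjc (a v)) (conjc c).
Proof.
move=> ha eps eps0; have [A1 [fA1 H1]] := ha _ eps0.
exists A1; split => // A fA sA.
by rewrite fsbig_finite // -rmorph_sum -rmorphB normc_conjc -fsbig_finite //; apply: H1.
Qed.

Lemma has_sum_supp1 (a : V -> C) c v :
  (forall w, w <> v -> a w = 0) -> has_sum a c -> a v = c.
Proof.
move=> supp ha; apply/eqP; rewrite -subr_eq0 -normc_eq0 eq_le normc_ge0 andbT.
apply/ler_addgt0Pr => eps eps0; rewrite add0r; apply: ltW.
have [A1 [fA1 H1]] := ha _ eps0.
have fA1v : finite_set (A1 `|` [set v]) by rewrite finite_setU; split.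
have := H1 _ fA1v (@subsetUl _ _ _).
rewrite (fsbigD1 v) ?fsbig1 //= ?addr0 //; last by right.
by move=> w [_ /= wv]; exact: supp.
Qed.

Lemma inner_is0_sum (s : V -> C) n (a : 'I_n -> C) (x : 'I_n -> V -> C) :
  (forall i, inner_is s (x i) 0) ->
  inner_is s (fun v => \sum_(i < n) a i * x i v) 0.
Proof.
rewrite /inner_is; elim: n a x => [|n IH] a x hx.
  by apply: (eq_has_sum _ has_sum0) => v; rewrite big_ord0 rmorph0 mulr0.
pose widen (i : 'I_n) := widen_ord (leqnSn n) i.
have := has_sumD (IH (a \o widen) (x \o widen) (fun i => hx (widen i)))
  (has_sumZl (conjc (a ord_max)) (hx ord_max)).
rewrite mulr0 addr0; apply: eq_has_sum => v.
by rewrite big_ord_recr /= rmorphD rmorphM /= mulrDr mulrCA.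
Qed.

Lemma weighted_amgm (t x y : R) : 0 < t -> x * y <= (t * x ^+ 2 + y ^+ 2 / t) / 2.
Proof.
move=> t0; have tn : t != 0 by rewrite gt_eqF.
have -> : y = t * (y / t) by rewrite mulrC divfK.
set u := y / t; have -> : (t * u) ^+ 2 / t = t * u ^+ 2 by field.
have : 0 <= t * (x - u) ^+ 2 by rewrite mulr_ge0 ?sqr_ge0 ?ltW.
by rewrite ler_pdivlMr //; nra.
Qed.

Lemma normc_inner_sum_le (t : R) (r : seq V) (s g : V -> C) : 0 < t ->
  normc (\sum_(v <- r) s v * conjc (g v)) <=
  (t * \sum_(v <- r) normc (s v) ^+ 2 + (\sum_(v <- r) normc (g v) ^+ 2) / t) / 2.
Proof.
move=> t0; apply: le_trans (ler_normc_sum _ _) _.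
rewrite mulr_sumr mulr_suml -big_split mulr_suml /=; apply: ler_sum => v _.
by rewrite Normc.normcM normc_conjc; exact: weighted_amgm.
Qed.

Lemma inner_is0_closure (s f : V -> C) : l2 s ->
  (forall delta : R, 0 < delta -> exists h : V -> C,
     (sqnorm (fun v => (f v - h v)%R) < delta%:E)%E /\ inner_is s h 0) ->
  inner_is s f 0.
Proof.
move=> l2s happ eps eps0; set K := fine (sqnorm s).
have K0 : 0 <= K by rewrite fine_ge0 // sqnorm_ge0.
set t := eps / (2 * (K + 1)).
have t0 : 0 < t by rewrite divr_gt0 // mulr_gt0 // ltr_wpDl.
have [h [hfh hh]] : exists h : V -> C,
    (sqnorm (fun v => (f v - h v)%R) < (t * eps / 2)%:E)%E /\ inner_is s h 0.
  by apply: happ; rewrite divr_gt0 // mulr_gt0.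
have [A0 [fA0 HA0]] := hh (eps / 2) (divr_gt0 eps0 (ltr0Sn _ 1)).
exists A0; split => // A fA sA.
have -> : \sum_(v \in A) s v * conjc (f v) - 0 =
    (\sum_(v \in A) s v * conjc (h v) - 0) + \sum_(v \in A) s v * conjc (f v - h v).
  rewrite !subr0 -fsbig_split //; apply: eq_fsbigr => v _.
  by rewrite rmorphB /= mulrBr addrC subrK.
apply: le_lt_trans (le_normcD _ _) _; rewrite [eps]splitr.
apply: ltr_leD; first exact: HA0.
(* |<s, f - h>| <= (t |s|^2 + |f - h|^2 / t) / 2, and t makes both terms <= eps / 2. *)
rewrite fsbig_finite //; apply: le_trans (normc_inner_sum_le _ _ _ t0) _.
set a := \sum_(v <- _) normc (s v) ^+ 2; set b := \sum_(v <- _) normc _ ^+ 2.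
have aK : a <= K by rewrite -lee_fin /K fineK ?l2_fin_num //; exact: fsum_sqr_le_sqnorm.
have b_lt : b < t * eps / 2.
  by rewrite -lte_fin; apply: le_lt_trans hfh; exact: fsum_sqr_le_sqnorm.
have ta_le : t * a <= eps / 2.
  have tK : t * (K + 1) = eps / 2 by rewrite /t; field; rewrite gt_eqF // ltr_wpDl.
  by rewrite -tK ler_wpM2l ?ltW //; lra.
have bt_le : b / t <= eps / 2 by rewrite ler_pdivrMr // mulrC mulrA ltW.
lra.
Qed.

Lemma clspan_inner_is0 (A : set (V -> C)) (s f : V -> C) : l2 s ->
  (forall x, A x -> inner_is s x 0) -> clspan A f -> inner_is s f 0.
Proof.
move=> l2s sA [_ fA]; apply: inner_is0_closure => // delta delta0.
have [n [a [x [Ax fx]]]] := fA _ delta0.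
by exists (fun v => \sum_(i < n) a i * x i v); split => //; apply: inner_is0_sum => i; exact: sA.
Qed.

Lemma esum_tail_lt (F : V -> \bar R) (eps : R) : (forall v, 0 <= F v)%E ->
  \esum_(v in [set: V]) F v \is a fin_num -> 0 < eps ->
  exists2 B : set V, finite_set B & (\esum_(v in ~` B) F v < eps%:E)%E.
Proof.
move=> F0 Sfin eps0.
have : (\esum_(v in [set: V]) F v - eps%:E < \esum_(v in [set: V]) F v)%E.
  by rewrite -(fineK Sfin) -EFinB lte_fin ltrBlDr ltrDl.
rewrite {2}/esum => /ereal_sup_gt [_ [B [fB _] <-] hB]; exists B => //.
have hsplit := esumID B setT F (fun v _ => F0 v).
rewrite setTI setTI (@esum_fset _ _ B F fB) in hsplit; last by move=> v _; exact: F0.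
have : (\sum_(v \in B) F v + \esum_(v in ~` B) F v)%E \is a fin_num by rewrite -hsplit.
rewrite fin_numD => /andP[Bfin Tfin].
move: hB; rewrite hsplit -(fineK Bfin) -(fineK Tfin) -EFinD !lte_fin; lra.
Qed.

Lemma sum_tnth_ebasis (r : seq V) (f : V -> C) (v : V) : uniq r ->
  \sum_(i < size r) f (tnth (in_tuple r) i) * ebasis R (tnth (in_tuple r) i) v =
  if v \in r then f v else 0.
Proof.
move=> ur; rewrite -(big_tnth _ _ r xpredT (fun y => f y * ebasis R y v)) /ebasis.
case: ifP => [vr|vr]; last first.
  rewrite big1_seq // => y /andP[_ yr]; case: eqP => [vy|]; last by rewrite mulr0.
  by rewrite -vy vr in yr.
rewrite (bigD1_seq v) //= eqxx mulr1 big1 ?addr0 // => y yv.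
by rewrite eq_sym (negbTE yv) mulr0.
Qed.

Lemma clspan_ebasis_supp (P : set V) (f : V -> C) : l2 f ->
  (forall w, ~ P w -> f w = 0) -> clspan [set ebasis R v | v in P] f.
Proof.
move=> l2f fP; split => // eps eps0.
have F0 v : (0 <= (normc (f v) ^+ 2)%:E)%E by rewrite lee_fin sqr_ge0.
have [B fB hB] := esum_tail_lt F0 (l2_fin_num l2f) eps0.
have fBP : finite_set (B `&` P) by apply: finite_setIl.
pose r : seq V := fset_set (B `&` P).
have inr v : (v \in r) = `[< (B `&` P) v >] by rewrite /r in_fset_set // inE.
exists (size r), (fun i => f (tnth (in_tuple r) i)),
  (fun i => ebasis R (tnth (in_tuple r) i)); split.
  move=> i; exists (tnth (in_tuple r) i) => //.
  by have := mem_tnth i (in_tuple r); rewrite inr => /asboolP [].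
apply: le_lt_trans hB; rewrite /sqnorm -[~` B]setTI esum_mkcondr; apply: le_esum => v _.
rewrite sum_tnth_ebasis ?fset_uniq // in_setC inr.
case: asboolP => [BPv|nBPv]; first by rewrite subrr Normc.normc0 expr0n; case: ifP.
rewrite subr0; case: (boolP (v \in B)) => //; rewrite in_setE => Bv.
by rewrite fP ?Normc.normc0 ?expr0n // => Pv; apply: nBPv.
Qed.

End L2.

Section Multishift.
Variables (R : realType) (d : nat) (Tr : 'I_d -> rtree) (lam : 'I_d -> PV Tr -> R).
Local Notation PV := (PV Tr).
Local Notation C := R[i].

Lemma Chij_par_uniq j (p q w : PV) : Chij j p w -> Chij j q w -> p = q.
Proof.
move=> [pw pk] [qw qk]; apply/ffunP => i.
by case: (eqVneq i j) => [->|ij]; [exact: tree_par_uniq pw qw | rewrite -pk // -qk].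
Qed.

Lemma shiftjE j (g : PV -> C) (p w : PV) : Chij j p w ->
  shiftj lam j g w = real_complex R (lam j w) * g p.
Proof.
move=> pw; rewrite /shiftj (_ : [set v | Chij j v w] = [set p]) ?fsbig_set1 //.
by apply/seteqP; split => [v /= vw | v /= ->] //; exact: Chij_par_uniq vw pw.
Qed.

Lemma shiftj_root j (g : PV -> C) (w : PV) : w j = troot (Tr j) ->
  shiftj lam j g w = 0.
Proof.
move=> wr; rewrite /shiftj (_ : [set v | Chij j v w] = set0) ?fsbig_set0 //.
by apply/seteqP; split => // v [] /=; rewrite wr (negbTE (tree_root_noparent _)).
Qed.

Lemma shiftj_ebasis j (u : PV) : shiftj lam j (ebasis R u) = Gamma lam j u.
Proof.
apply/funext => w; rewrite /Gamma; case: asboolP => [uw|nuw].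
  by rewrite (shiftjE _ uw) /ebasis eqxx mulr1.
rewrite /shiftj fsbig1 // => v /= vw; rewrite /ebasis.
by case: eqP => [vu|]; [rewrite vu in vw | rewrite mulr0].
Qed.

Lemma shiftj_l2 j (g : PV -> C) : is_multishift lam -> l2 g -> l2 (shiftj lam j g).
Proof.
move=> [_ bounded] l2g; have [M HM] := bounded j.
by apply: le_lt_trans (HM g l2g) _; rewrite -(fineK (l2_fin_num l2g)) -EFinM ltry.
Qed.

Lemma shiftj_orth_chi_minus_gamma j k (v : PV) (g x : PV -> C) :
  Dj k v -> chi_minus_gamma lam k v x -> inner_is (shiftj lam j g) x 0.
Proof.
move=> [_ v_root] [_ [x_supp x_orth]].
have := has_sumZl (if j == k then g v else 0) (has_sum_conjc x_orth).
rewrite rmorph0 mulr0; apply: eq_has_sum => w.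
case: (asboolP (Chij k v w)) => [vw|nvw]; last by rewrite x_supp // mul0r rmorph0 !mulr0.
have conjcM (a b : C) : conjc (a * b) = conjc a * conjc b by exact: rmorphM.
rewrite /Gamma asboolT // conjcM conjcK.
case: (eqVneq j k) => [->|jk]; first by rewrite (shiftjE g vw); ring.
by rewrite shiftj_root ?mul0r //; case: vw => _ ->; rewrite ?v_root.
Qed.

Lemma shiftj_orth_eroot j (g : PV -> C) :
  inner_is (shiftj lam j g) (ebasis R (proot Tr)) 0.
Proof.
apply: eq_has_sum; last exact: has_sum0.
move=> w; rewrite /ebasis.
case: eqP => [->|]; last by rewrite rmorph0 mulr0.
by rewrite shiftj_root ?mul0r // ffunE.
Qed.

Lemma lower_space_sub_kernel : is_multishift lam ->
  lower_space lam `<=` joint_kernel_adj lam.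
Proof.
move=> ms f fL; split; first by case: fL.
move=> j g l2g; apply: clspan_inner_is0 fL; first exact: shiftj_l2.
move=> x [[k [v [Dv x_chi]]] | ->]; first exact: shiftj_orth_chi_minus_gamma Dv x_chi.
exact: shiftj_orth_eroot.
Qed.

Lemma exists_Chij_parent j (w : PV) : w j <> troot (Tr j) -> exists u, Chij j u w.
Proof.
move=> /tree_root_unique [p pw].
pose u : PV := [ffun i => @dfwith _ (fun i => tv (Tr i)) (fun i => w i) j p i].
have uj : u j = p by rewrite ffunE; exact: dfwith_in.
exists u; split => [|k kj]; first by rewrite uj.
by rewrite ffunE; apply/esym/dfwith_out; rewrite eq_sym.
Qed.

Lemma Chij_only_child j (u w w' : PV) : ~ Vprec (u j) ->
  Chij j u w -> Chij j u w' -> w' = w.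
Proof.
move=> one_child [uw wk] [uw' w'k]; apply/ffunP => i.
case: (eqVneq i j) => [->|ij]; last by rewrite w'k // wk.
by apply: contrapT => neq; apply: one_child; exists (w' j), (w j).
Qed.

Lemma kernel_vanish_off_Fprod (f : PV -> C) (w : PV) : is_multishift lam ->
  joint_kernel_adj lam f -> ~ Fprod w -> f w = 0.
Proof.
move=> [lam_pos _] [_ f_ker] /existsNP [j wF].
have wr : w j <> troot (Tr j) by move=> wr; apply: wF; left.
have [u uw] := exists_Chij_parent wr.
have one_child : ~ Vprec (u j) by move=> Vu; apply: wF; right; exists (u j); case: uw.
have lam_neq0 : real_complex R (lam j w) != 0.
  by apply/eqP => -[] /eqP; rewrite gt_eqF // lam_pos.
have supp w' : w' <> w -> Gamma lam j u w' * conjc (f w') = 0.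
  rewrite /Gamma; case: asboolP => [uw' ww'|_ _]; last by rewrite mul0r.
  by case: ww'; exact: Chij_only_child one_child uw uw'.
have := f_ker j _ (ebasis_l2 _ u); rewrite /inner_is shiftj_ebasis.
move=> /(has_sum_supp1 supp); rewrite /Gamma asboolT // => /eqP.
by rewrite mulf_eq0 (negbTE lam_neq0) conjc_eq0 => /eqP.
Qed.

Lemma kernel_sub_upper_space : is_multishift lam ->
  joint_kernel_adj lam `<=` @upper_space R d Tr.
Proof.
move=> ms f f_ker; apply: clspan_ebasis_supp; first by case: f_ker.
by move=> w; exact: kernel_vanish_off_Fprod.
Qed.

End Multishift.

Theorem mainTheorem15 (R : realType) (d : nat) (Tr : 'I_d -> rtree)
    (lam : 'I_d -> PV Tr -> R) :
  (0 < d)%N ->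
  is_multishift lam -> commuting_multishift lam ->
  lower_space lam `<=` joint_kernel_adj lam /\
  joint_kernel_adj lam `<=` @upper_space R d Tr.
Proof.
move=> _ ms _; split; [exact: lower_space_sub_kernel | exact: kernel_sub_upper_space].
Qed.
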